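(* For a ring $R$, the following are equivalent: (1) $R$ is a DT ring; (2) $R$ is a semi-tripotent ring; (3) for each $a\in R$ there exist idempotents $e,f\in R$ with $ef=fe$ and $j\in J(R)$ such that $a=e+f+j$; (4) for each $a\in R$ there exist idempotents $e,f\in R$ with $ef=fe$ and $j\in J(R)$ such that $a=e-f+j$; (5) for each $a\in R$ there exist idempotents $e,f\in R$ with $ef=0=fe$ and $j\in J(R)$ such that $a=e-f+j$.
   Context: All rings are associative with identity. $J(R)$ is the Jacobson radical, $U(R)$ the group of units. $\Delta(R)=\{x\in R: x+u\in U(R)\text{ for all }u\in U(R)\}$. $\mathrm{Tr}(R)=\{x\in R: x^3=x\}$. A ring $R$ is a DT ring if every $r\in R$ can be written $r=e+d$ with $e\in\mathrm{Tr}(R)$ and $d\in\Delta(R)$. A ring $R$ is semi-tripotent if every $r\in R$ can be written $r=e+j$ with $e\in\mathrm{Tr}(R)$ and $j\in J(R)$. *)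

From mathcomp Require Import all_boot all_algebra.
Set Implicit Arguments. Unset Strict Implicit. Unset Printing Implicit Defensive.
Import GRing.Theory.
Local Open Scope ring_scope.

Section RingNotions.
Variable R : unitRingType.

Definition tripotent (x : R) : Prop := x ^+ 3 = x.

Definition idem_elt (x : R) : Prop := x * x = x.

Definition in_Delta (x : R) : Prop :=
  forall u : R, u \is a GRing.unit -> (x + u) \is a GRing.unit.

Definition left_ideal (I : R -> Prop) : Prop :=
  [/\ I 0,
      (forall x y, I x -> I y -> I (x - y)) &
      (forall r x, I x -> I (r * x))].

Definition maximal_left_ideal (M : R -> Prop) : Prop :=
  [/\ left_ideal M, ~ M 1 &
      forall I : R -> Prop, left_ideal I -> (forall x, M x -> I x) ->
        (forall x, I x) \/ (forall x, I x -> M x)].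

Definition in_jacobson (x : R) : Prop :=
  forall M : R -> Prop, maximal_left_ideal M -> M x.

Definition DT_ring : Prop :=
  forall r : R, exists e d, tripotent e /\ in_Delta d /\ r = e + d.

Definition semi_tripotent : Prop :=
  forall r : R, exists e j, tripotent e /\ in_jacobson j /\ r = e + j.

End RingNotions.

From mathcomp Require Import all_boot all_algebra.
From mathcomp Require Import classical_sets.
From Stdlib Require Import Classical.
Import GRing.Theory.
Local Open Scope ring_scope.

(* [J ⊆ Δ] in every ring, and in a DT ring also [Δ ⊆ J]: for [d ∈ Δ] and [r = e + d'] with [e]
   tripotent, the involution [1 + e - e²] rewrites [1 - r d] as a unit minus [e² d], which is left
   invertible because [e²] is idempotent.  For the idempotent decompositions, each of (2) and (3)
   gives [6 ∈ J] and lifting of idempotents modulo [J]; then [-2p], for [p] idempotent, is congruent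
   to an idempotent of the corner [pRp], which turns a sum of commuting idempotents into a
   difference of orthogonal ones and back, while [e - f = (e - ef) - (f - ef)] is tripotent. *)

Section Jacobson.
Context {R : unitRingType}.
Implicit Types a b x y r s : R.
Local Notation J := (@in_jacobson R).

Lemma maximal_left_ideal_sup {L : R -> Prop} : left_ideal L -> ~ L 1 ->
  exists2 M, maximal_left_ideal M & forall x, L x -> M x.
Proof.
case=> L0 LB LM nL1.
(* [Zorn_bigcup] needs the empty union (of the empty chain) to satisfy [P], hence the guard. *)
pose P (A : set R) := [/\ (forall x y, A x -> A y -> A (x - y)),
   (forall r x, A x -> A (r * x)), ~ A 1 &
   ((exists x, A x) -> forall x, L x -> A x)].
have PL : P L by split => // _.
have [] := @Zorn_bigcup R P.
  move=> F FP Ftot; split.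
  - move=> x y [X FX Xx] [Y FY Yy].
    have [XY|YX] := Ftot X Y FX FY.
    + exists Y => //; have [h _ _ _] := FP Y FY; exact: h (XY _ Xx) Yy.
    + exists X => //; have [h _ _ _] := FP X FX; exact: h Xx (YX _ Yy).
  - move=> r x [X FX Xx]; exists X => //; have [_ h _ _] := FP X FX; exact: h.
  - move=> [X FX X1]; have [_ _ h _] := FP X FX; exact: h.
  - move=> [x [X FX Xx]] z Lz; exists X => //; have [_ _ _ h] := FP X FX.
    exact: h (ex_intro _ x Xx) _ Lz.
move=> A [[AB AM nA1 AL] Amax].
have [x0 Ax0] : exists x, A x.
  apply: NNPP => hne; apply: (Amax L _ PL); split.
    by move=> x Ax; exfalso; apply: hne; exists x.
  by move=> h; apply: hne; exists 0; exact: h.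
have LA := AL (ex_intro _ x0 Ax0).
exists A => //; split => //.
  by split => //; rewrite -(subrr x0); exact: AB.
move=> I [I0 IB IM] AI.
have [I1|nI1] := classic (I 1); first by left => x; rewrite -(mulr1 x); exact: IM.
right => x Ix; apply: NNPP => nAx.
have PI : P I by split => // _ z Lz; exact: AI _ (LA _ Lz).
apply: (Amax I _ PI); split; first exact: AI.
by move=> h; exact: nAx (h _ Ix).
Qed.

Lemma jacobson_left_inv {x} r : J x -> exists y, y * (1 - r * x) = 1.
Proof.
move=> Jx; apply: NNPP => hn.
pose L z := exists s, z = s * (1 - r * x).
have L_ideal : left_ideal L.
  split; first by exists 0; rewrite mul0r.
  - by move=> _ _ [s1 ->] [s2 ->]; exists (s1 - s2); rewrite mulrBl.
  - by move=> r' _ [s ->]; exists (r' * s); rewrite mulrA.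
have L_proper : ~ L 1 by move=> [s h]; apply: hn; exists s.
have [M Mmax LM] := maximal_left_ideal_sup L_ideal L_proper.
have [[M0 MB MM] nM1 _] := Mmax.
have M1rx : M (1 - r * x) by apply: LM; exists 1; rewrite mul1r.
have Mrx : M (r * x) by apply: MM; exact: Jx Mmax.
apply: nM1; have := MB _ _ M1rx (MB _ _ M0 Mrx).
by rewrite sub0r opprK subrK.
Qed.

Lemma jacobson_of_left_inv x : (forall r, exists y, y * (1 - r * x) = 1) -> J x.
Proof.
move=> H M [[M0 MB MM] nM1 Mmax]; apply: NNPP => nMx.
pose I z := exists m s, M m /\ z = m + s * x.
have Iid : left_ideal I.
  split; first by exists 0, 0; rewrite mul0r addr0.
  - move=> _ _ [m1 [s1 [M1 ->]]] [m2 [s2 [M2 ->]]].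
    exists (m1 - m2), (s1 - s2); split; first exact: MB.
    by rewrite mulrBl opprD addrACA.
  - move=> r _ [m [s [Mm ->]]]; exists (r * m), (r * s); split; first exact: MM.
    by rewrite mulrDr mulrA.
have [] := Mmax I Iid.
- by move=> m Mm; exists m, 0; rewrite mul0r addr0.
- move=> /(_ 1) [m [s [Mm e1]]].
  have [y hy] := H s.
  apply: nM1; rewrite -hy; apply: MM.
  by rewrite e1 addrK.
- by move=> /(_ x) h; apply: nMx; apply: h; exists 0, 1; rewrite mul1r add0r.
Qed.

(* The left inverse [y] of [1 - r x] is itself of the form [1 - r' x], hence left invertible. *)
Lemma jacobson_unit {x} r : J x -> (1 - r * x) \is a GRing.unit.
Proof.
move=> Jx; have [y yx] := jacobson_left_inv r Jx.
have yE : y = 1 - (- (y * r)) * x.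
  by rewrite mulNr opprK -mulrA -yx mulrBr mulr1 subrK.
have [z zy] := jacobson_left_inv (- (y * r)) Jx; rewrite -yE in zy.
have zE : z = 1 - r * x by rewrite -[LHS]mulr1 -[X in z * X]yx mulrA zy mul1r.
by apply/unitrP; exists y; split; rewrite // -zE.
Qed.

Lemma unit_1subMC a b : (1 - a * b) \is a GRing.unit -> (1 - b * a) \is a GRing.unit.
Proof.
move=> hu; set u := (1 - a * b)^-1.
have h1 : a * (1 - b * a) = (1 - a * b) * a by rewrite mulrBr mulrBl mulr1 mul1r mulrA.
have h2 : (1 - b * a) * b = b * (1 - a * b) by rewrite mulrBr mulrBl mulr1 mul1r mulrA.
apply/unitrP; exists (1 + b * u * a); split.
  by rewrite mulrDl mul1r -!mulrA h1 (mulrA u) mulVr // mul1r subrK.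
by rewrite mulrDr mulr1 !mulrA h2 -(mulrA b) mulrV // mulr1 subrK.
Qed.

Lemma jacobson0 : J 0.
Proof. by move=> M [[]]. Qed.

Lemma jacobsonB {x y} : J x -> J y -> J (x - y).
Proof.
move=> Jx Jy M Mmax; case: (Mmax) => [[_ MB _] _ _].
by apply: MB; [apply: Jx | apply: Jy].
Qed.

Lemma jacobsonMl r {x} : J x -> J (r * x).
Proof. by move=> Jx M Mmax; case: (Mmax) => [[_ _ MM] _ _]; apply: MM; apply: Jx. Qed.

Lemma jacobsonN {x} : J x -> J (- x).
Proof. by move=> Jx; rewrite -sub0r; exact: jacobsonB jacobson0 Jx. Qed.

Lemma jacobsonD {x y} : J x -> J y -> J (x + y).
Proof. by move=> Jx Jy; rewrite -[y]opprK; exact: jacobsonB Jx (jacobsonN Jy). Qed.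

Lemma jacobsonMr {x} s : J x -> J (x * s).
Proof.
move=> Jx; apply: jacobson_of_left_inv => r.
have := jacobson_unit (s * r) Jx; rewrite -mulrA => /unit_1subMC; rewrite mulrA.
by move=> hu; exists (1 - r * x * s)^-1; rewrite mulVr.
Qed.

End Jacobson.

Section CongruenceModJacobson.
Context {R : unitRingType}.
Implicit Types x y z : R.
Local Notation J := (@in_jacobson R).

Definition eqJ x y := J (x - y).

Lemma eqJ_refl x : eqJ x x.
Proof. by rewrite /eqJ subrr; exact: jacobson0. Qed.

Lemma eqJ_sym {x y} : eqJ x y -> eqJ y x.
Proof. by move=> Jxy; rewrite /eqJ -opprB; exact: jacobsonN Jxy. Qed.

Lemma eqJ_trans {x y z} : eqJ x y -> eqJ y z -> eqJ x z.
Proof. by move=> Jxy Jyz; have := jacobsonD Jxy Jyz; rewrite /eqJ addrA subrK. Qed.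

Lemma eqJ0 x : eqJ x 0 <-> J x.
Proof. by rewrite /eqJ subr0. Qed.

Lemma eqJ_addJ x {y} : J y -> eqJ (x + y) x.
Proof. by rewrite /eqJ addrC addKr. Qed.

Lemma eqJD {x y x' y'} : eqJ x x' -> eqJ y y' -> eqJ (x + y) (x' + y').
Proof. by move=> Jx Jy; have := jacobsonD Jx Jy; rewrite /eqJ opprD addrACA. Qed.

Lemma eqJN {x y} : eqJ x y -> eqJ (- x) (- y).
Proof. by move=> Jxy; rewrite /eqJ -opprD; exact: jacobsonN Jxy. Qed.

Lemma eqJB {x y x' y'} : eqJ x x' -> eqJ y y' -> eqJ (x - y) (x' - y').
Proof. by move=> Jx Jy; exact: eqJD Jx (eqJN Jy). Qed.

Lemma eqJM {x y x' y'} : eqJ x x' -> eqJ y y' -> eqJ (x * y) (x' * y').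
Proof.
move=> Jx Jy; have := jacobsonD (jacobsonMr y Jx) (jacobsonMl x' Jy).
by rewrite /eqJ mulrBl mulrBr addrA subrK.
Qed.

End CongruenceModJacobson.

Section Delta.
Context {R : unitRingType}.
Implicit Types a b d u x : R.
Local Notation J := (@in_jacobson R).
Local Notation Delta := (@in_Delta R).

Lemma Delta_jacobson {x} : J x -> Delta x.
Proof.
move=> Jx u Uu.
have -> : x + u = u * (1 - (- u^-1) * x).
  by rewrite mulNr opprK mulrDr mulr1 mulrA mulrV // mul1r addrC.
by rewrite unitrMr //; exact: jacobson_unit.
Qed.

Lemma DeltaN {d} : Delta d -> Delta (- d).
Proof. by move=> Dd u Uu; rewrite -[u]opprK -opprD unitrN; apply: Dd; rewrite unitrN. Qed.

Lemma DeltaD {a b} : Delta a -> Delta b -> Delta (a + b).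
Proof. by move=> Da Db u Uu; rewrite -addrA; apply/Da/Db. Qed.

Lemma DeltaB {a b} : Delta a -> Delta b -> Delta (a - b).
Proof. by move=> Da /DeltaN; exact: DeltaD. Qed.

Lemma DeltaMl {u d} : u \is a GRing.unit -> Delta d -> Delta (u * d).
Proof.
move=> Uu Dd v Uv.
have -> : u * d + v = u * (d + u^-1 * v) by rewrite mulrDr mulrA mulrV // mul1r.
by rewrite unitrMr //; apply: Dd; rewrite unitrMl // unitrV.
Qed.

Lemma unit_1addDelta {d} : Delta d -> (1 + d) \is a GRing.unit.
Proof. by move=> Dd; rewrite addrC; apply/Dd/unitr1. Qed.

Lemma unit_1subDelta {d} : Delta d -> (1 - d) \is a GRing.unit.
Proof. by move=> /DeltaN; exact: unit_1addDelta. Qed.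

Lemma DeltaM {a b} : Delta a -> Delta b -> Delta (a * b).
Proof.
move=> Da Db.
have unit_1addM a' : Delta a' -> (1 + a' * b) \is a GRing.unit.
  move=> Da'; have expand : (1 + a') * (1 + b) = 1 + a' * b + (a' + b).
    by rewrite mulrDl mul1r mulrDr mulr1 (addrC a') addrACA (addrC b).
  rewrite -[1 + a' * b](addrK (a' + b)) -expand addrC.
  have U : ((1 + a') * (1 + b)) \is a GRing.unit by rewrite unitrMr ?unit_1addDelta.
  exact: DeltaN (DeltaD Da' Db) _ U.
move=> v Uv.
have -> : a * b + v = v * (1 + (v^-1 * a) * b).
  by rewrite mulrDr mulr1 !mulrA mulrV // mul1r addrC.
by rewrite unitrMr //; apply/unit_1addM/DeltaMl; rewrite ?unitrV.
Qed.

End Delta.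

Section DeltaIdempotent.
Context {R : unitRingType}.
Implicit Types d p u : R.
Local Notation Delta := (@in_Delta R).

Lemma idem_conj {u p} : u \is a GRing.unit -> idem_elt p -> idem_elt (u^-1 * p * u).
Proof.
move=> Uu pp.
by rewrite /idem_elt !mulrA -(mulrA _ u) mulrV // mulr1 -(mulrA _ p p) pp.
Qed.

(* With q = 1 - p and the square-zero element n = q d p,
   (1 - q d)(1 - p d) = 1 - (1 - n) d, and 1 - n is a unit. *)
Lemma left_inv_1subM_idem_Delta {p d} : idem_elt p -> Delta d ->
  exists y, y * (1 - p * d) = 1.
Proof.
move=> pp Dd; have [q qE] : exists q, q = 1 - p by eexists.
have [n nE] : exists n, n = q * d * p by eexists.
have pq : p * q = 0 by rewrite qE mulrBr mulr1 pp subrr.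
have nn : n * n = 0 by rewrite nE -!mulrA (mulrA p) pq mul0r !mulr0.
have Un : (1 - n) \is a GRing.unit.
  apply/unitrP; exists (1 + n); split.
    by rewrite mulrDl mul1r mulrBr mulr1 nn subr0 subrK.
  by rewrite mulrBl mul1r mulrDr mulr1 nn addr0 addrK.
have factor : (1 - q * d) * (1 - p * d) = 1 - (1 - n) * d.
  have dE : d = p * d + q * d by rewrite -mulrDl qE addrC subrK mul1r.
  have ndE : n * d = q * d * (p * d) by rewrite nE !mulrA.
  rewrite mulrBl mul1r mulrBr mulr1 [in RHS]mulrBl mul1r ndE.
  by rewrite [X in _ = 1 - (X - _)]dE !opprD !opprK !addrA.
have U := unit_1subDelta (DeltaMl Un Dd).
by exists ((1 - (1 - n) * d)^-1 * (1 - q * d)); rewrite -mulrA factor mulVr.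
Qed.

Lemma left_inv_subM_idem_Delta {u p d} : u \is a GRing.unit -> idem_elt p -> Delta d ->
  exists y, y * (u - p * d) = 1.
Proof.
move=> Uu pp Dd.
have Uu' : u^-1 \is a GRing.unit by rewrite unitrV.
have [y yE] := left_inv_1subM_idem_Delta (idem_conj Uu pp) (DeltaMl Uu' Dd).
exists (y * u^-1); rewrite -mulrA mulrBr mulVr // -[RHS]yE.
by rewrite !mulrA -(mulrA _ u) mulrV // mulr1.
Qed.

End DeltaIdempotent.

Section Tripotent.
Context {R : unitRingType}.
Implicit Types e : R.

Lemma tripotent_idem_sqr {e} : tripotent e ->
  [/\ e * (e * e) = e, e * e * e = e & idem_elt (e * e)].
Proof.
rewrite /tripotent exprS expr2 => eee; split => //; first by rewrite -mulrA.
by rewrite /idem_elt mulrA -(mulrA e) eee.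
Qed.

Lemma tripotent_unit {e} : tripotent e -> (1 + (e - e * e)) \is a GRing.unit.
Proof.
case/tripotent_idem_sqr => eee eee' ee.
have [y yE] : exists y, y = e - e * e by eexists.
have yy : y * y = - (y + y).
  by rewrite yE mulrBl !mulrBr eee eee' ee -(opprB e (e * e)) [RHS]opprD.
rewrite -yE; apply/unitrP; exists (1 + y).
suff inv : (1 + y) * (1 + y) = 1 by [].
by rewrite mulrDl mul1r mulrDr mulr1 yy addrA -(addrA 1 y y) addrK.
Qed.

End Tripotent.

Section DTSemiTripotent.
Context {R : unitRingType}.
Local Notation J := (@in_jacobson R).
Local Notation Delta := (@in_Delta R).

Lemma DT_Delta_jacobson : DT_ring R -> forall d : R, Delta d -> J d.
Proof.
move=> DT d Dd; apply: jacobson_of_left_inv => r.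
have [e [d' [te [Dd' ->]]]] := DT r.
have [_ _ ee] := tripotent_idem_sqr te.
set v := 1 + (e - e * e).
have Uv : v \is a GRing.unit by exact: tripotent_unit.
have Dd0 : Delta ((v - 1) * d + d' * d).
  by rewrite mulrBl mul1r; exact: DeltaD (DeltaB (DeltaMl Uv Dd) Dd) (DeltaM Dd' Dd).
have -> : 1 - (e + d') * d = (1 - ((v - 1) * d + d' * d)) - e * e * d.
  have -> : e + d' = v - 1 + d' + e * e.
    by rewrite /v (addrC 1) addrK -addrA (addrC d') addrA subrK.
  by rewrite !mulrDl opprD addrA.
exact: left_inv_subM_idem_Delta (unit_1subDelta Dd0) ee Dd.
Qed.

Lemma DT_ring_semi_tripotent : DT_ring R <-> semi_tripotent R.
Proof.
split=> [DT | ST] r.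
  have [e [d [te [Dd ->]]]] := DT r.
  by exists e, d; split => //; split => //; exact: DT_Delta_jacobson.
have [e [j [te [Jj ->]]]] := ST r.
by exists e, j; split => //; split => //; exact: Delta_jacobson.
Qed.

End DTSemiTripotent.

Section Idempotents.
Context {R : unitRingType}.
Implicit Types a b c e f : R.

Lemma idem_add_orth {a b} : idem_elt a -> idem_elt b -> a * b = 0 -> b * a = 0 ->
  idem_elt (a + b).
Proof. by move=> aa bb ab ba; rewrite /idem_elt mulrDl !mulrDr aa bb ab ba addr0 add0r. Qed.

Lemma tripotent_sub_orth {a b} : idem_elt a -> idem_elt b -> a * b = 0 -> b * a = 0 ->
  tripotent (a - b).
Proof.
move=> aa bb ab ba; rewrite /tripotent exprS expr2.
have -> : (a - b) * (a - b) = a + b.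
  by rewrite mulrBl !mulrBr aa ab ba bb subr0 sub0r opprK.
by rewrite mulrBl !mulrDr aa ab ba bb addr0 add0r.
Qed.

Lemma idem_corner_compl {c f} : idem_elt c -> idem_elt f -> c * f = f -> f * c = f ->
  [/\ idem_elt (c - f), (c - f) * f = 0 & f * (c - f) = 0].
Proof.
move=> cc ff cf fc; split.
- by rewrite /idem_elt mulrBl !mulrBr cc cf fc ff subrr subr0.
- by rewrite mulrBl cf ff subrr.
- by rewrite mulrBr fc ff subrr.
Qed.

Section Commuting.
Context {e f : R}.
Hypotheses (ee : idem_elt e) (ff : idem_elt f) (ef : e * f = f * e).

Lemma comm_idem_mul :
  [/\ idem_elt (e * f), e * (e * f) = e * f, e * f * e = e * f,
      f * (e * f) = e * f & e * f * f = e * f].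
Proof.
split.
- by rewrite /idem_elt -mulrA (mulrA f) -ef -mulrA ff mulrA ee.
- by rewrite mulrA ee.
- by rewrite -mulrA -ef mulrA ee.
- by rewrite mulrA -ef -mulrA ff.
- by rewrite -mulrA ff.
Qed.

Lemma comm_idem_sqr_sub : (e + f) * (e + f) - (e + f) = (e * f) *+ 2.
Proof.
rewrite mulrDl !mulrDr ee ff -ef (addrC (e * f) f) addrACA.
by rewrite (addrC (e + f)) addrK mulr2n.
Qed.

Lemma comm_idem_split :
  [/\ idem_elt (e - e * f), idem_elt (f - e * f),
      (e - e * f) * (f - e * f) = 0 & (f - e * f) * (e - e * f) = 0].
Proof.
have [pp ep pe fp pf] := comm_idem_mul.
have [e'e' _ _] := idem_corner_compl ee pp ep pe.
have [f'f' _ _] := idem_corner_compl ff pp fp pf.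
split => //.
- by rewrite mulrBl !mulrBr ep pf pp !subrr.
- by rewrite mulrBl !mulrBr -ef fp pe pp !subrr.
Qed.

Lemma comm_idem_symdiff :
  [/\ idem_elt (e + f - (e * f) *+ 2), (e + f - (e * f) *+ 2) * (e * f) = 0
    & (e * f) * (e + f - (e * f) *+ 2) = 0].
Proof.
have [pp ep pe fp pf] := comm_idem_mul.
have [e'e' f'f' e'f' f'e'] := comm_idem_split.
have -> : e + f - (e * f) *+ 2 = (e - e * f) + (f - e * f).
  by rewrite addrACA -opprD mulr2n.
split; first exact: idem_add_orth.
- by rewrite mulrDl !mulrBl ep pp fp !subrr addr0.
- by rewrite mulrDr !mulrBr pe pp pf !subrr addr0.
Qed.

End Commuting.
End Idempotents.

Definition lifts_idempotents (R : unitRingType) : Prop :=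
  forall z : R, in_jacobson (z * z - z) -> exists2 h, idem_elt h & eqJ z h.

Section LiftingModJacobson.
Context {R : unitRingType}.
Implicit Types c g h p z : R.
Local Notation J := (@in_jacobson R).

(* Conjugating [h] by the unit [w = 1 - h g] kills [h g]; cutting by [1 - g] kills [g h]. *)
Lemma idem_orth_lift {g h} : idem_elt g -> idem_elt h -> J (h * g) -> J (g * h) ->
  exists f, [/\ idem_elt f, g * f = 0, f * g = 0 & eqJ f h].
Proof.
move=> gg hh Jhg Jgh.
have Uw := jacobson_unit 1 Jhg; rewrite mul1r in Uw.
set w := 1 - h * g in Uw.
have [h' h'E] : exists h', h' = w^-1 * h * w by eexists.
have h'h' : idem_elt h' by rewrite h'E; exact: idem_conj.
have h'g : h' * g = 0.
  by rewrite h'E -!mulrA /w mulrBl mul1r -mulrA gg mulrBr (mulrA h h) hh subrr !mulr0.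
have c1w : 1 - w = h * g by rewrite /w subKr.
have w1 : eqJ w 1 by rewrite /eqJ -opprB c1w; exact: jacobsonN.
have wV1 : eqJ w^-1 1.
  rewrite /eqJ; have -> : w^-1 - 1 = w^-1 * (1 - w) by rewrite mulrBr mulr1 mulVr.
  by rewrite c1w; exact: jacobsonMl.
have h'h : eqJ h' h.
  by have := eqJM (eqJM wV1 (eqJ_refl h)) w1; rewrite mul1r mulr1 -h'E.
have h'c : h' * (1 - g) = h' by rewrite mulrBr mulr1 h'g subr0.
exists ((1 - g) * h'); split.
- by rewrite /idem_elt -mulrA (mulrA h') h'c h'h'.
- by rewrite mulrA mulrBr mulr1 gg subrr mul0r.
- by rewrite -mulrA h'g mulr0.
- rewrite mulrBl mul1r -[X in eqJ _ X]subr0; apply: (eqJB h'h).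
  exact: eqJ_trans (eqJM (eqJ_refl g) h'h) ((eqJ0 _).2 Jgh).
Qed.

Section Lift.
Hypothesis lift : lifts_idempotents R.

Lemma corner_idem_lift {c z} : idem_elt c -> z * (1 - c) = 0 -> (1 - c) * z = 0 ->
  J (z * z - z) -> exists f, [/\ idem_elt f, c * f = f, f * c = f & eqJ f z].
Proof.
move=> cc zc cz Jz.
have [h hh zh] := lift z Jz.
have [c'c' _ _] := idem_corner_compl (mulr1 1) cc (mul1r c) (mulr1 c).
have hz := eqJ_sym zh.
have Jhc' : J (h * (1 - c)).
  by apply/eqJ0; rewrite -zc; exact: eqJM hz (eqJ_refl _).
have Jc'h : J ((1 - c) * h).
  by apply/eqJ0; rewrite -cz; exact: eqJM (eqJ_refl _) hz.
have [f [ff c'f fc' fh]] := idem_orth_lift c'c' hh Jhc' Jc'h.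
exists f; split => //; last exact: eqJ_trans fh hz.
- by move/eqP: c'f; rewrite mulrBl mul1r subr_eq0 => /eqP <-.
- by move/eqP: fc'; rewrite mulrBr mulr1 subr_eq0 => /eqP <-.
Qed.

Hypothesis J6 : J 6%:R.

(* [-2p] is an idempotent modulo [J], since [(-2p)^2 - (-2p) = 6p]. *)
Lemma corner_idem_neg2 {p} : idem_elt p ->
  exists k, [/\ idem_elt k, p * k = k, k * p = k & eqJ k (- (p *+ 2))].
Proof.
move=> pp; apply: corner_idem_lift => //.
- by rewrite mulNr mulrnAl mulrBr mulr1 pp subrr mul0rn oppr0.
- by rewrite mulrN mulrnAr mulrBl mul1r pp subrr mul0rn oppr0.
- rewrite mulrNN !mulrnAl !mulrnAr pp opprK -mulrnA -mulrnDr -mulr_natl.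
  exact: jacobsonMr p J6.
Qed.

End Lift.
End LiftingModJacobson.

Definition decomp_sum_comm (R : unitRingType) : Prop :=
  forall a : R, exists e f j, idem_elt e /\ idem_elt f /\ e * f = f * e /\
    in_jacobson j /\ a = e + f + j.

Definition decomp_diff_comm (R : unitRingType) : Prop :=
  forall a : R, exists e f j, idem_elt e /\ idem_elt f /\ e * f = f * e /\
    in_jacobson j /\ a = e - f + j.

Definition decomp_diff_orth (R : unitRingType) : Prop :=
  forall a : R, exists e f j, idem_elt e /\ idem_elt f /\ e * f = 0 /\ f * e = 0 /\
    in_jacobson j /\ a = e - f + j.

Section SemiTripotent.
Context {R : unitRingType}.
Local Notation J := (@in_jacobson R).
Hypothesis ST : semi_tripotent R.

Lemma semi_tripotent_eqJ (a : R) : exists2 t, tripotent t & eqJ a t.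
Proof. by have [t [j [tt [Jj ->]]]] := ST a; exists t => //; exact: eqJ_addJ. Qed.

Lemma semi_tripotent_jacobson6 : J 6%:R.
Proof.
have [t tt two_t] := semi_tripotent_eqJ 2%:R.
have [_ ttt _] := tripotent_idem_sqr tt.
have := eqJM (eqJM two_t two_t) two_t; rewrite ttt => eight_t.
by have := eqJ_trans eight_t (eqJ_sym two_t); rewrite /eqJ -!natrM -natrB.
Qed.

Lemma semi_tripotent_jacobson_sqr {x : R} : J (x * x) -> J x.
Proof.
move=> Jxx; have [t tt xt] := semi_tripotent_eqJ x.
have [ttt _ _] := tripotent_idem_sqr tt.
have Jtt : J (t * t).
  by apply/eqJ0; exact: eqJ_trans (eqJ_sym (eqJM xt xt)) ((eqJ0 _).2 Jxx).
have Jt : J t by rewrite -ttt; exact: jacobsonMl.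
by have := jacobsonD xt Jt; rewrite subrK.
Qed.

Lemma semi_tripotent_lifts : lifts_idempotents R.
Proof.
move=> z Jz; have [t tt zt] := semi_tripotent_eqJ z.
have [_ _ ss] := tripotent_idem_sqr tt.
by exists (t * t) => //; exact: eqJ_trans (eqJ_sym Jz) (eqJM zt zt).
Qed.

(* [t = t² + z] with [z = t - t²] in the corner of [t²] and [z² = -2z]; then [3z ∈ J], so [z]
   lifts to an idempotent [f] of that corner and [t] is congruent to [(t² - f) - f]. *)
Lemma semi_tripotent_decomp_diff_orth : decomp_diff_orth R.
Proof.
move=> a; have [t tt a_t] := semi_tripotent_eqJ a.
have [ts st ss] := tripotent_idem_sqr tt.
have [s sE] : exists s, s = t * t by eexists.
rewrite -sE in ts st ss.
have [z zE] : exists z, z = t - s by eexists.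
have zs : z * (1 - s) = 0 by rewrite zE mulrBr mulr1 mulrBl ts ss !subrr.
have sz : (1 - s) * z = 0 by rewrite zE mulrBl mul1r mulrBr st ss !subrr.
have zz : z * z = - (z + z).
  have tz : t * z = - z by rewrite zE mulrBr -sE ts opprB.
  have s_z : s * z = z by move/eqP: sz; rewrite mulrBl mul1r subr_eq0 => /eqP <-.
  by rewrite {1}zE mulrBl tz s_z opprD.
have J3z : J (z *+ 3).
  apply: semi_tripotent_jacobson_sqr.
  have -> : z *+ 3 * (z *+ 3) = - (z *+ 3 *+ 6).
    by rewrite mulrnAl mulrnAr zz -mulr2n !mulNrn -!mulrnA.
  apply: jacobsonN; rewrite -mulr_natl; exact: jacobsonMr semi_tripotent_jacobson6.
have Jz : J (z * z - z).
  by rewrite zz -opprD -mulr2n -mulrSr; exact: jacobsonN.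
have [f [ff sf fs fz]] := corner_idem_lift semi_tripotent_lifts ss zs sz Jz.
have [e'e' e'f fe'] := idem_corner_compl ss ff sf fs.
exists (s - f), f, (a - (s - f - f)); do !split => //; last by rewrite subrKC.
apply: (eqJ_trans a_t); rewrite -(subrKC s t) -zE.
apply: (eqJ_trans _ (eqJB (eqJB (eqJ_refl s) (eqJ_sym fz)) (eqJ_sym fz))).
by rewrite /eqJ !opprB addrC !addrA subrK -!mulr2n -mulrSr.
Qed.

Lemma semi_tripotent_decomp_sum_comm : decomp_sum_comm R.
Proof.
move=> a; have [g [f [j [gg [ff [gf [fg [Jj ->]]]]]]]] := semi_tripotent_decomp_diff_orth a.
have [k [kk fk kf k_neg2]] :=
  corner_idem_neg2 semi_tripotent_lifts semi_tripotent_jacobson6 ff.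
have gk : g * k = 0 by rewrite -fk mulrA gf mul0r.
have kg : k * g = 0 by rewrite -kf -mulrA fg mulr0.
exists (g + f), k, (g - f + j - (g + f + k)); do !split => //; last by rewrite subrKC.
- exact: idem_add_orth.
- by rewrite mulrDl mulrDr gk fk kg kf.
apply: (eqJ_trans (eqJ_addJ _ Jj)).
have -> : g - f = g + f - f *+ 2 by rewrite mulr2n opprD addrA addrK.
exact: eqJD (eqJ_refl _) (eqJ_sym k_neg2).
Qed.

End SemiTripotent.

Section DecompSumComm.
Context {R : unitRingType}.
Local Notation J := (@in_jacobson R).
Hypothesis sum_comm : decomp_sum_comm R.

Lemma decomp_sum_comm_eqJ (a : R) :
  exists e f, [/\ idem_elt e, idem_elt f, e * f = f * e & eqJ a (e + f)].
Proof.
have [e [f [j [ee [ff [ef [Jj ->]]]]]]] := sum_comm a.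
by exists e, f; split => //; exact: eqJ_addJ.
Qed.

Lemma decomp_sum_comm_lifts : lifts_idempotents R.
Proof.
move=> z Jz; have [e [f [ee ff ef ze]]] := decomp_sum_comm_eqJ z.
have [GG _ _] := comm_idem_symdiff ee ff ef.
exists (e + f - (e * f) *+ 2) => //.
have J2p : J ((e * f) *+ 2).
  rewrite -(comm_idem_sqr_sub ee ff ef); apply/eqJ0.
  exact: eqJ_trans (eqJ_sym (eqJB (eqJM ze ze) ze)) ((eqJ0 _).2 Jz).
by apply: (eqJ_trans ze); rewrite /eqJ opprB subrKC.
Qed.

(* With [3 = e + f] mod [J] and [p = e f]: [6 = 2p], hence [18 = 2p (e + f) = 4p = 12]. *)
Lemma decomp_sum_comm_jacobson6 : J 6%:R.
Proof.
have [e [f [ee ff ef three]]] := decomp_sum_comm_eqJ 3%:R.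
have [_ _ pe _ pf] := comm_idem_mul ee ff ef.
have six : eqJ (3%:R * 3%:R - 3%:R) ((e * f) *+ 2).
  by rewrite -(comm_idem_sqr_sub ee ff ef); exact: eqJB (eqJM three three) three.
have eighteen := eqJM six three.
rewrite [_ *+ 2 * _]mulrnAl [e * f * _]mulrDr pe pf in eighteen.
have twelve := eqJD six six; rewrite -mulrnDl in twelve.
have := eqJ_trans eighteen (eqJ_sym twelve).
by rewrite /eqJ -!natrM -!natrB // -natrM -natrD -natrB.
Qed.

Lemma decomp_sum_comm_diff_orth : decomp_diff_orth R.
Proof.
move=> a; have [e [f [j [ee [ff [ef [Jj ->]]]]]]] := sum_comm a.
have [GG Gp pG] := comm_idem_symdiff ee ff ef.
have [pp _ _ _ _] := comm_idem_mul ee ff ef.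
have [k [kk pk kp k_neg2]] :=
  corner_idem_neg2 decomp_sum_comm_lifts decomp_sum_comm_jacobson6 pp.
exists (e + f - (e * f) *+ 2), k, (e + f + j - (e + f - (e * f) *+ 2 - k)).
do !split => //; last by rewrite subrKC.
- by rewrite -pk mulrA Gp mul0r.
- by rewrite -kp -mulrA pG mulr0.
apply: (eqJ_trans (eqJ_addJ _ Jj)).
rewrite -[X in eqJ X _](subrK ((e * f) *+ 2)) -[X in eqJ (_ + X) _]opprK.
exact: eqJB (eqJ_refl _) (eqJ_sym k_neg2).
Qed.

End DecompSumComm.

Lemma decomp_diff_orth_comm {R : unitRingType} : decomp_diff_orth R -> decomp_diff_comm R.
Proof.
move=> diff_orth a; have [e [f [j [ee [ff [ef [fe [Jj ->]]]]]]]] := diff_orth a.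
by exists e, f, j; rewrite ef fe.
Qed.

Lemma decomp_diff_comm_semi_tripotent {R : unitRingType} :
  decomp_diff_comm R -> semi_tripotent R.
Proof.
move=> diff_comm a; have [e [f [j [ee [ff [ef [Jj ->]]]]]]] := diff_comm a.
have [e'e' f'f' e'f' f'e'] := comm_idem_split ee ff ef.
exists ((e - e * f) - (f - e * f)), j; split; first exact: tripotent_sub_orth.
by split => //; rewrite opprB addrA subrK.
Qed.

Theorem theorem4p10 (R : unitRingType) :
  [/\ (DT_ring R <-> semi_tripotent R),
      (semi_tripotent R <->
         forall a : R, exists e f j, idem_elt e /\ idem_elt f /\ e * f = f * e /\
           in_jacobson j /\ a = e + f + j),
      (semi_tripotent R <->
         forall a : R, exists e f j, idem_elt e /\ idem_elt f /\ e * f = f * e /\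
           in_jacobson j /\ a = e - f + j) &
      (semi_tripotent R <->
         forall a : R, exists e f j, idem_elt e /\ idem_elt f /\ e * f = 0 /\ f * e = 0 /\
           in_jacobson j /\ a = e - f + j)].
Proof.
have diff_orth_ST : decomp_diff_orth R -> semi_tripotent R.
  by move=> /decomp_diff_orth_comm; exact: decomp_diff_comm_semi_tripotent.
split.
- exact: DT_ring_semi_tripotent.
- split; first exact: semi_tripotent_decomp_sum_comm.
  by move=> /decomp_sum_comm_diff_orth; exact: diff_orth_ST.
- split; last exact: decomp_diff_comm_semi_tripotent.
  by move=> /semi_tripotent_decomp_diff_orth; exact: decomp_diff_orth_comm.
- by split; [exact: semi_tripotent_decomp_diff_orth | exact: diff_orth_ST].
Qed.
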